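(* Let $P=\Bbbk[x_1,x_2,x_3]$ with Poisson bracket $\{x_1,x_2\}=0$, $\{x_2,x_3\}=3x_1^2$, $\{x_3,x_1\}=0$. Then $\mathrm{PAut}_{\mathrm{gr}}(P)$ consists exactly of the maps whose matrix is \[ \begin{bmatrix}\epsilon & 0 & 0\\ a & b & c\\ d & e & f\end{bmatrix},\quad a,b,c,d,e,f\in\Bbbk,\ bf\neq ce,\ \epsilon^2=bf-ce, \] and the set of Poisson reflections of $P$ is \[ \mathrm{PR}(P)=\left\{\begin{bmatrix}-1&0&0\\ a&1&0\\ d&0&1\end{bmatrix}: a,d\in\Bbbk\right\}. \]
   Context: $\Bbbk$ is algebraically closed of characteristic $0$; $P$ has the standard grading. A graded Poisson automorphism $\phi$ (degree-preserving bijective algebra and Lie homomorphism) is identified with the matrix $[a_{ij}]$ where $\phi(x_i)=\sum_{k=1}^3 a_{ik}x_k$. A Poisson reflection is a finite-order graded Poisson automorphism $\phi$ such that $\phi|_{P_1}$ has eigenvalues $1,1,\xi$ for some primitive $m$-th root of unity $\xi\neq1$. *)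

From HB Require Import structures.
From mathcomp Require Import all_boot all_algebra.
From mathcomp Require Import mpoly.

Set Implicit Arguments.
Unset Strict Implicit.
Unset Printing Implicit Defensive.

Import GRing.Theory.
Local Open Scope ring_scope.

(* The polynomial algebra P = k[x_1,x_2,x_3] is {mpoly K[3]};
   the paper's variable x_(i+1) is 'X_i (i : 'I_3). *)

Section PoissonDefs.
Variable K : fieldType.

Local Notation P := {mpoly K[3]}.

Definition homog_of (d : nat) (p : P) : bool := p \is ishomog1 d mdeg.

Definition br_gen (i j : 'I_3) : P :=
  if ((i : nat) == 1%N) && ((j : nat) == 2%N) then 3%:R * 'X_0 ^+ 2
  else if ((i : nat) == 2%N) && ((j : nat) == 1%N) then - (3%:R * 'X_0 ^+ 2)
  else 0.

(* The unique biderivation extending br_gen: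
   {f,g} = sum_{i,j} (d f / d x_i) (d g / d x_j) {x_i,x_j}. *)
Definition pbr (f g : P) : P :=
  \sum_(i < 3) \sum_(j < 3) mderiv i f * mderiv j g * br_gen i j.

Definition is_gr_PAut (phi : P -> P) : Prop :=
  bijective phi /\
  (forall (c : K) (p q : P), phi (c *: p + q) = c *: phi p + phi q) /\
  phi 1 = 1 /\
  (forall p q : P, phi (p * q) = phi p * phi q) /\
  (forall (d : nat) (p : P), homog_of d p -> homog_of d (phi p)) /\
  (forall p q : P, phi (pbr p q) = pbr (phi p) (phi q)).

Definition mat_P1 (phi : P -> P) : 'M[K]_3 :=
  \matrix_(i < 3, k < 3) (phi 'X_i)@_(U_(k))%MM.

Definition lin_subst (A : 'M[K]_3) (p : P) : P :=
  comp_mpoly [tuple \sum_(k < 3) A i k *: ('X_k : P) | i < 3] p.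

Definition finite_order (phi : P -> P) : Prop :=
  exists n : nat, (0 < n)%N /\ forall p : P, iter n phi p = p.

Definition is_PReflection (phi : P -> P) : Prop :=
  is_gr_PAut phi /\ finite_order phi /\
  exists (m : nat) (xi : K), m.-primitive_root xi /\ xi != 1 /\
    char_poly (mat_P1 phi) = ('X - 1) ^+ 2 * ('X - xi%:P).

End PoissonDefs.

Definition mx3 (K : fieldType) (a11 a12 a13 a21 a22 a23 a31 a32 a33 : K)
  : 'M[K]_3 :=
  \matrix_(i < 3, j < 3)
    nth 0 (nth [::] [:: [:: a11; a12; a13]; [:: a21; a22; a23];
                        [:: a31; a32; a33]] i) j.

(* A graded automorphism phi is the linear substitution by its matrix M on
   P_1, and the bracket of two linear forms u, v is (u_2 v_3 - u_3 v_2) 3 x_1^2.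
   Since x_1 is Poisson-central and phi is onto, phi(x_1) is central, which
   forces the first row of M to be (eps, 0, 0); applying phi to
   {x_2, x_3} = 3 x_1^2 gives eps^2 = bf - ce, and conversely these
   conditions make the substitution Poisson on generators, hence everywhere.
   For a reflection, (X - eps)(X^2 - (b + f) X + (bf - ce)) = (X - 1)^2 (X - xi)
   with xi <> 1 and eps^2 = bf - ce forces eps = -1 and a unipotent lower block
   B, whose k-th power is 1 + k (B - 1); in characteristic 0, finite order then
   gives B = 1. *)

From HB Require Import structures.
From mathcomp Require Import all_boot all_algebra.
From mathcomp Require Import mpoly.
From mathcomp Require Import ring.

Set Implicit Arguments.
Unset Strict Implicit.
Unset Printing Implicit Defensive.

Import GRing.Theory.
Local Open Scope ring_scope.

Lemma det_mx3 (R : comNzRingType) (A : 'M[R]_3) : \det A =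
  A 0 0 * (A 1 1 * A 2 2 - A 1 2 * A 2 1)
  - A 0 1 * (A 1 0 * A 2 2 - A 1 2 * A 2 0)
  + A 0 2 * (A 1 0 * A 2 1 - A 1 1 * A 2 0).
Proof.
have -> : A = \matrix_(i, j) A (inord i) (inord j).
  by apply/matrixP => i j; rewrite mxE !inord_val.
rewrite (expand_det_row _ 0) !big_ord_recl big_ord0 /cofactor.
rewrite !(expand_det_row _ 0) !big_ord_recl !big_ord0 /cofactor !det_mx11 !mxE /=.
rewrite !expr0 !expr1; ring.
Qed.

Lemma sum_ord3 (V : nmodType) (F : 'I_3 -> V) : \sum_(i < 3) F i = F 0 + F 1 + F 2.
Proof.
by rewrite !big_ord_recl big_ord0 addr0 addrA; congr (F _ + F _ + F _); apply: val_inj.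
Qed.

Section Mx3.
Variable K : fieldType.

Lemma mx3E (A : 'M[K]_3) :
  A = mx3 (A 0 0) (A 0 1) (A 0 2) (A 1 0) (A 1 1) (A 1 2) (A 2 0) (A 2 1) (A 2 2).
Proof.
apply/matrixP => i j; rewrite !mxE /=.
by case: i => [[|[|[|//]]] ?]; case: j => [[|[|[|//]]] ?] /=; congr (A _ _); apply: val_inj.
Qed.

Lemma mx3_1 : 1 = mx3 1 0 0 0 1 0 0 0 1 :> 'M[K]_3.
Proof.
apply/matrixP => i j; rewrite !mxE /=.
by case: i => [[|[|[|//]]] ?]; case: j => [[|[|[|//]]] ?].
Qed.

Lemma mulmx_mx3 (a11 a12 a13 a21 a22 a23 a31 a32 a33
                 b11 b12 b13 b21 b22 b23 b31 b32 b33 : K) :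
  mx3 a11 a12 a13 a21 a22 a23 a31 a32 a33 *m mx3 b11 b12 b13 b21 b22 b23 b31 b32 b33 =
  mx3 (a11 * b11 + a12 * b21 + a13 * b31) (a11 * b12 + a12 * b22 + a13 * b32)
      (a11 * b13 + a12 * b23 + a13 * b33)
      (a21 * b11 + a22 * b21 + a23 * b31) (a21 * b12 + a22 * b22 + a23 * b32)
      (a21 * b13 + a22 * b23 + a23 * b33)
      (a31 * b11 + a32 * b21 + a33 * b31) (a31 * b12 + a32 * b22 + a33 * b32)
      (a31 * b13 + a32 * b23 + a33 * b33).
Proof.
apply/matrixP => i j; rewrite !mxE !big_ord_recl big_ord0 !mxE /=.
by case: i => [[|[|[|//]]] ?]; case: j => [[|[|[|//]]] ?] /=; rewrite addr0 ?addrA.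
Qed.

Lemma det_mx3_block (eps a b c d e f : K) :
  \det (mx3 eps 0 0 a b c d e f) = eps * (b * f - c * e).
Proof. by rewrite det_mx3 !mxE /=; ring. Qed.

Lemma char_poly_mx3_block (eps a b c d e f : K) :
  char_poly (mx3 eps 0 0 a b c d e f) =
  ('X - eps%:P) * ('X ^+ 2 - (b + f)%:P * 'X + (b * f - c * e)%:P).
Proof.
rewrite /char_poly det_mx3 /char_poly_mx !mxE /=.
rewrite !mulr1n !mulr0n ?rmorph0 !rmorphD ?rmorphB !rmorphM /=; ring.
Qed.

End Mx3.

Section LinearForms.
Variables (R : comNzRingType) (n : nat).
Local Notation P := {mpoly R[n]}.
Implicit Types (p q : P) (u : 'rV[R]_n).

Lemma mpoly_alg_ind (S : P -> Prop) : S 1 -> (forall i, S 'X_i) ->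
  (forall p q, S p -> S q -> S (p + q)) -> (forall c p, S p -> S (c *: p)) ->
  (forall p q, S p -> S q -> S (p * q)) -> forall p, S p.
Proof.
move=> S1 SX SD SZ SM; elim/mpolyind => [|c m p _ _ Sp].
  by rewrite -(scale0r 1); apply: SZ.
apply: SD => //; apply: SZ; rewrite mpolyXE_id.
elim/big_ind: _ => // i _; elim: (m i) => [|k IH]; first by rewrite expr0.
by rewrite exprS; apply: SM.
Qed.

Definition lin_form u : P := \sum_(k < n) u 0 k *: 'X_k.

Lemma lin_form_delta j : lin_form (delta_mx 0 j) = 'X_j.
Proof.
rewrite /lin_form (bigD1 j) //= mxE !eqxx scale1r big1 ?addr0 // => k /negbTE.
by rewrite mxE eq_sym => ->; rewrite andbF scale0r.
Qed.

Lemma mcoeff_lin_form u j : (lin_form u)@_U_(j) = u 0 j.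
Proof.
rewrite /lin_form raddf_sum (bigD1 j) //= mcoeffZ mcoeffXU eqxx mulr1.
by rewrite big1 ?addr0 // => k /negbTE kj; rewrite mcoeffZ mcoeffXU kj mulr0.
Qed.

Lemma lin_form_homog u : lin_form u \is 1.-homog.
Proof.
apply: rpred_sum => k _; apply: rpredZ.
by rewrite dhomogX /= mdeg1.
Qed.

Lemma homog1_lin_form p : p \is 1.-homog -> p = lin_form (\row_k p@_U_(k)).
Proof.
move=> hp; apply/mpolyP => m; rewrite /lin_form raddf_sum /=.
under eq_bigr do rewrite mcoeffZ mcoeffX mxE.
have [/mdeg1P [i /eqP ->]|hm] := boolP (mdeg m == 1%N).
  rewrite (bigD1 i) //= eqxx mulr1 big1 ?addr0 // => k /negbTE hk.
  by rewrite eq_mnm1 hk mulr0.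
rewrite (dhomog_nemf_coeff hp hm) big1 // => k _.
by case: eqP => [km|]; [move: hm; rewrite -km mdeg1 | rewrite mulr0].
Qed.

Lemma mderivXU i j : mderiv i ('X_j : P) = (j == i)%:R%:MP.
Proof.
rewrite mderivX mnm1E; case: eqP => [->|_]; last by rewrite scale0r.
have -> : (U_(i) - U_(i))%MM = 0%MM by apply/mnmP => k; rewrite mnmBE mnm0E subnn.
by rewrite mpolyX0 scale1r.
Qed.

Lemma mderiv_lin_form i u : mderiv i (lin_form u) = (u 0 i)%:MP.
Proof.
rewrite /lin_form raddf_sum (bigD1 i) //= mderivZ mderivXU eqxx -mul_mpolyC mulr1.
by rewrite big1 ?addr0 // => k /negbTE ki; rewrite mderivZ mderivXU ki scaler0.
Qed.

End LinearForms.

Section Biderivation.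
Variables (R : comNzRingType) (n : nat) (G : 'I_n -> 'I_n -> {mpoly R[n]}).
Local Notation P := {mpoly R[n]}.
Implicit Types (p q r : P).

Definition bider p q : P :=
  \sum_(i < n) \sum_(j < n) mderiv i p * mderiv j q * G i j.

Lemma biderDl r : {morph bider^~ r : p q / p + q}.
Proof.
move=> p q; rewrite /bider -big_split; apply: eq_bigr => i _; rewrite -big_split.
by apply: eq_bigr => j _ /=; rewrite mderivD !mulrDl.
Qed.

Lemma biderDr r : {morph bider r : p q / p + q}.
Proof.
move=> p q; rewrite /bider -big_split; apply: eq_bigr => i _; rewrite -big_split.
by apply: eq_bigr => j _ /=; rewrite mderivD mulrDr !mulrDl.
Qed.

Lemma biderZl c p q : bider (c *: p) q = c *: bider p q.
Proof.
rewrite /bider scaler_sumr; apply: eq_bigr => i _; rewrite scaler_sumr.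
by apply: eq_bigr => j _; rewrite mderivZ !scalerAl.
Qed.

Lemma biderZr c p q : bider p (c *: q) = c *: bider p q.
Proof.
rewrite /bider scaler_sumr; apply: eq_bigr => i _; rewrite scaler_sumr.
by apply: eq_bigr => j _; rewrite mderivZ scalerAl scalerAr.
Qed.

Lemma biderMl p q r : bider (p * q) r = p * bider q r + q * bider p r.
Proof.
rewrite /bider !mulr_sumr -big_split; apply: eq_bigr => i _.
rewrite !mulr_sumr -big_split; apply: eq_bigr => j _ /=.
by rewrite mderivM; ring.
Qed.

Lemma biderMr p q r : bider r (p * q) = p * bider r q + q * bider r p.
Proof.
rewrite /bider !mulr_sumr -big_split; apply: eq_bigr => i _.
rewrite !mulr_sumr -big_split; apply: eq_bigr => j _ /=.
by rewrite mderivM; ring.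
Qed.

Lemma bider1l q : bider 1 q = 0.
Proof.
rewrite /bider big1 // => i _; rewrite big1 // => j _.
by rewrite -mpolyC1 mderivC !mul0r.
Qed.

Lemma bider1r p : bider p 1 = 0.
Proof.
rewrite /bider big1 // => i _; rewrite big1 // => j _.
by rewrite -mpolyC1 mderivC mulr0 mul0r.
Qed.

Lemma bider_lin_form (u v : 'rV[R]_n) :
  bider (lin_form u) (lin_form v) = \sum_(i < n) \sum_(j < n) (u 0 i * v 0 j) *: G i j.
Proof.
apply: eq_bigr => i _; apply: eq_bigr => j _.
by rewrite !mderiv_lin_form -rmorphM mul_mpolyC.
Qed.

Lemma biderXX i j : bider 'X_i 'X_j = G i j.
Proof.
rewrite -!lin_form_delta bider_lin_form (bigD1 i) //= (bigD1 j) //= !mxE !eqxx.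
rewrite mulr1 scale1r !big1 ?addr0 // => [k /negbTE ki|l /negbTE lj].
  by rewrite big1 // => l _; rewrite !mxE ki mul0r scale0r.
by rewrite !mxE lj mulr0 scale0r.
Qed.

Lemma rmorph_bider (f : {rmorphism P -> P}) : scalable f ->
  (forall i j, f (G i j) = bider (f 'X_i) (f 'X_j)) ->
  forall p q, f (bider p q) = bider (f p) (f q).
Proof.
move=> fZ fG.
have fX i q : f (bider 'X_i q) = bider (f 'X_i) (f q).
  elim/mpoly_alg_ind: q => [|j|p q Hp Hq|c p Hp|p q Hp Hq].
  - by rewrite rmorph1 !bider1r raddf0.
  - by rewrite biderXX fG.
  - by rewrite biderDr !rmorphD Hp Hq biderDr.
  - by rewrite biderZr !fZ Hp biderZr.
  - by rewrite biderMr rmorphD !rmorphM Hp Hq biderMr.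
move=> p q; elim/mpoly_alg_ind: p => [|i|p p' Hp Hq|c p Hp|p p' Hp Hq].
- by rewrite rmorph1 !bider1l raddf0.
- exact: fX.
- by rewrite biderDl !rmorphD Hp Hq biderDl.
- by rewrite biderZl !fZ Hp biderZl.
- by rewrite biderMl rmorphD !rmorphM Hp Hq biderMl.
Qed.

End Biderivation.

Section LinearSubstitution.
Variable K : fieldType.
Local Notation P := {mpoly K[3]}.
Implicit Types (A B : 'M[K]_3) (p q : P) (u : 'rV[K]_3).

HB.instance Definition _ A := GRing.LRMorphism.copy (lin_subst A)
  (comp_mpoly [tuple \sum_(k < 3) A i k *: ('X_k : P) | i < 3]).

Lemma lin_substX A i : lin_subst A 'X_i = lin_form (row i A).
Proof.
rewrite /lin_subst comp_mpolyXU -tnth_nth tnth_mktuple.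
by apply: eq_bigr => k _; rewrite mxE.
Qed.

Lemma lin_subst_lin_form A u : lin_subst A (lin_form u) = lin_form (u *m A).
Proof.
rewrite /lin_form raddf_sum /=.
under eq_bigr do rewrite linearZ /= lin_substX /lin_form scaler_sumr.
rewrite exchange_big /=; apply: eq_bigr => l _; rewrite mxE scaler_suml.
by apply: eq_bigr => k _; rewrite scalerA mxE.
Qed.

Lemma lin_subst_comp A B p : lin_subst A (lin_subst B p) = lin_subst (B *m A) p.
Proof.
elim/mpoly_alg_ind: p => [|i|p q Hp Hq|c p Hp|p q Hp Hq].
- by rewrite !rmorph1.
- by rewrite !lin_substX lin_subst_lin_form row_mul.
- by rewrite !rmorphD /= Hp Hq.
- by rewrite !linearZ /= Hp.
- by rewrite !rmorphM /= Hp Hq.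
Qed.

Lemma lin_subst1 p : lin_subst 1 p = p.
Proof.
elim/mpoly_alg_ind: p => [|i|p q Hp Hq|c p Hp|p q Hp Hq].
- by rewrite rmorph1.
- by rewrite lin_substX row1 lin_form_delta.
- by rewrite rmorphD /= Hp Hq.
- by rewrite linearZ /= Hp.
- by rewrite rmorphM /= Hp Hq.
Qed.

Lemma iter_lin_subst (phi : P -> P) A : phi =1 lin_subst A ->
  forall k, iter k phi =1 lin_subst (A ^+ k).
Proof.
move=> hphi; elim=> [|k IH] p /=; first by rewrite expr0 lin_subst1.
by rewrite IH hphi lin_subst_comp exprSr mulmxE.
Qed.

Lemma lin_subst_homog A d p : homog_of d p -> homog_of d (lin_subst A p).
Proof.
move=> hp; rewrite [p]mpolyE raddf_sum /= big_seq; apply: rpred_sum => m mm.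
rewrite linearZ /=; apply: rpredZ.
rewrite /lin_subst comp_mpolyX -(dhomog_mf hp mm) /= mdegE.
elim/big_rec2: _ => [|i d' q _ hq]; first exact: dhomog1.
have := dhomogMn (m i) (lin_form_homog (row i A)).
by rewrite mul1n -lin_substX /lin_subst comp_mpolyXU -tnth_nth => /dhomogM; apply.
Qed.

Lemma mat_P1_lin_subst A : mat_P1 (lin_subst A) = A.
Proof. by apply/matrixP => i j; rewrite mxE lin_substX mcoeff_lin_form mxE. Qed.

Lemma eq_mat_P1 (f g : P -> P) : f =1 g -> mat_P1 f = mat_P1 g.
Proof. by move=> fg; apply/matrixP => i j; rewrite !mxE fg. Qed.

End LinearSubstitution.

Section PoissonAutomorphisms.
Variable K : fieldType.
Hypothesis K_char0 : [pchar K] =i pred0.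
Local Notation P := {mpoly K[3]}.
Local Notation br23 := (3%:R * 'X_0 ^+ 2 : P).
Implicit Types (A : 'M[K]_3) (p q : P) (u v : 'rV[K]_3).

Lemma pbr_lin_form u v :
  pbr (lin_form u) (lin_form v) = (u 0 1 * v 0 2 - u 0 2 * v 0 1) *: br23.
Proof.
rewrite [pbr _ _]bider_lin_form !sum_ord3 /br_gen /=.
rewrite -!mul_mpolyC !rmorphB !rmorphM /=; ring.
Qed.

Lemma pbr_X0l q : pbr 'X_0 q = 0.
Proof.
rewrite /pbr big1 // => i _; rewrite big1 // => j _; rewrite mderivXU.
by case: i => [[|[|[|//]]] ?]; rewrite /br_gen /= ?mulr0 ?mul0r.
Qed.

Lemma lin_subst_br23 A : A 0 1 = 0 -> A 0 2 = 0 -> lin_subst A br23 = A 0 0 ^+ 2 *: br23.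
Proof.
move=> A01 A02; rewrite rmorphM rmorph_nat rmorphXn /= lin_substX /lin_form.
rewrite sum_ord3 !mxE.
by rewrite A01 A02 !scale0r !addr0 exprZn -scalerAr.
Qed.

Lemma lin_subst_pbr A : A 0 1 = 0 -> A 0 2 = 0 ->
  A 0 0 ^+ 2 = A 1 1 * A 2 2 - A 1 2 * A 2 1 ->
  forall p q, lin_subst A (pbr p q) = pbr (lin_subst A p) (lin_subst A q).
Proof.
move=> A01 A02 A00; apply: rmorph_bider => [c p|i j]; first exact: linearZ.
rewrite /= -[br_gen K i j]biderXX -!lin_form_delta.
rewrite [bider _ _ _]pbr_lin_form linearZ /= lin_subst_br23 // !lin_subst_lin_form.
rewrite [bider _ _ _]pbr_lin_form scalerA; congr (_ *: _).
rewrite -!rowE !mxE A00 [A in RHS]mx3E !mxE A01 A02.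
by case: i => [[|[|[|//]]] ?]; case: j => [[|[|[|//]]] ?] /=; ring.
Qed.

Lemma natr_neq0 m : (0 < m)%N -> m%:R != 0 :> K.
Proof. by move=> m_gt0; rewrite (proj1 (pcharf0P _) K_char0) -lt0n. Qed.

Lemma scale_br23_inj (x y : K) : x *: br23 = y *: br23 -> x = y.
Proof.
move=> /(congr1 (mcoeff (U_(ord0 : 'I_3) *+ 2)%MM)).
rewrite !mcoeffZ mpolyXn -(rmorph_nat (@mpolyC 3 K)) mcoeffCM mcoeffX eqxx mulr1.
by move/mulIf; apply; apply: natr_neq0.
Qed.

Lemma lin_form_central u :
  (forall q, pbr (lin_form u) q = 0) -> u 0 1 = 0 /\ u 0 2 = 0.
Proof.
move=> central; split; apply: scale_br23_inj; rewrite scale0r.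
  have := central 'X_2; rewrite -lin_form_delta pbr_lin_form !mxE /=.
  by rewrite mulr1 mulr0 subr0.
have := central 'X_1; rewrite -lin_form_delta pbr_lin_form !mxE /=.
by rewrite mulr1 mulr0 sub0r => /eqP; rewrite scaleNr oppr_eq0 => /eqP.
Qed.

Lemma gr_PAut_lin_subst (phi : P -> P) : is_gr_PAut phi -> phi =1 lin_subst (mat_P1 phi).
Proof.
case=> _ [phi_lin [phi1 [phiM [phi_homog _]]]].
have phi0 : phi 0 = 0.
  have := phi_lin 1 0 0; rewrite scaler0 add0r scale1r => phi00.
  by apply: (addrI (phi 0)); rewrite -phi00 addr0.
have phiD p q : phi (p + q) = phi p + phi q by rewrite -[p]scale1r phi_lin !scale1r.
have phiZ c p : phi (c *: p) = c *: phi p by rewrite -[c *: p]addr0 phi_lin phi0 addr0.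
elim/mpoly_alg_ind => [|i|p q Hp Hq|c p Hp|p q Hp Hq].
- by rewrite phi1 rmorph1.
- rewrite lin_substX [LHS]homog1_lin_form; last first.
    by apply: phi_homog; rewrite /homog_of dhomogX /= mdeg1.
  by congr lin_form; apply/matrixP => ? k; rewrite !mxE.
- by rewrite phiD rmorphD /= Hp Hq.
- by rewrite phiZ linearZ /= Hp.
- by rewrite phiM rmorphM /= Hp Hq.
Qed.

Lemma is_gr_PAut_eq (f g : P -> P) : f =1 g -> is_gr_PAut f -> is_gr_PAut g.
Proof.
move=> fg [f_bij [f_lin [f1 [fM [f_homog f_pbr]]]]]; split; first exact: eq_bij fg.
split; first by move=> c p q; rewrite -!fg.
split; first by rewrite -fg.
split; first by move=> p q; rewrite -!fg.
split; first by move=> d p; rewrite -fg; apply: f_homog.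
by move=> p q; rewrite -!fg.
Qed.

Lemma is_gr_PAut_mx3 (eps a b c d e f : K) :
  b * f != c * e -> eps ^+ 2 = b * f - c * e ->
  is_gr_PAut (lin_subst (mx3 eps 0 0 a b c d e f)).
Proof.
set M := mx3 _ _ _ _ _ _ _ _ _ => det_bc eps2.
have M_unit : M \in unitmx.
  rewrite unitmxE det_mx3_block unitfE mulf_neq0 ?subr_eq0 //.
  by apply: contra_neq det_bc => eps0; apply/eqP; rewrite -subr_eq0 -eps2 eps0 expr0n.
split.
  by exists (lin_subst (invmx M)) => p; rewrite lin_subst_comp ?mulmxV ?mulVmx // lin_subst1.
split; first by move=> c' p q; rewrite linearP.
split; first exact: rmorph1.
split; first exact: rmorphM.
split; first by move=> deg p; apply: lin_subst_homog.
by apply: lin_subst_pbr; rewrite !mxE.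
Qed.

Lemma gr_PAut_mx3 (phi : P -> P) : is_gr_PAut phi ->
  exists eps a b c d e f : K, b * f != c * e /\ eps ^+ 2 = b * f - c * e /\
    phi =1 lin_subst (mx3 eps 0 0 a b c d e f).
Proof.
move=> gr_phi; have phiE := gr_PAut_lin_subst gr_phi.
case: gr_phi => [[g phiK gK] [_ [_ [_ [_ phi_pbr]]]]].
set M := mat_P1 phi in phiE; clearbody M.
have phiX i : phi 'X_i = lin_form (row i M) by rewrite phiE lin_substX.
have phi0 : phi 0 = 0 by rewrite phiE rmorph0.
have [M01 M02] : M 0 1 = 0 /\ M 0 2 = 0.
  have := @lin_form_central (row 0 M); rewrite !mxE; apply=> q.
  by rewrite -phiX -[q]gK -phi_pbr pbr_X0l phi0.
have M00 : M 0 0 ^+ 2 = M 1 1 * M 2 2 - M 1 2 * M 2 1.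
  apply: scale_br23_inj; have := phi_pbr 'X_1 'X_2.
  by rewrite [pbr _ _]biderXX /= !phiX pbr_lin_form !mxE phiE lin_subst_br23.
exists (M 0 0), (M 1 0), (M 1 1), (M 1 2), (M 2 0), (M 2 1), (M 2 2).
split; last by split=> // p; rewrite phiE [M in LHS]mx3E M01 M02.
apply/eqP => det0.
have M00_0 : M 0 0 = 0 by apply/eqP; rewrite -sqrf_eq0 M00 det0 subrr.
have /(congr1 g) : phi 'X_0 = phi 0.
  by rewrite phi0 phiX /lin_form sum_ord3 !mxE M00_0 M01 M02 !scale0r !addr0.
rewrite !phiK -lin_form_delta => /(congr1 (mcoeff U_(0%R))).
by rewrite mcoeff_lin_form mcoeff0 mxE !eqxx => /eqP; rewrite oner_eq0.
Qed.

End PoissonAutomorphisms.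

Lemma reflection_char_poly (R : idomainType) (e s p xi : R) :
  ('X - e%:P) * ('X ^+ 2 - s%:P * 'X + p%:P) = ('X - 1) ^+ 2 * ('X - xi%:P) ->
  e ^+ 2 = p -> xi != 1 -> [/\ e = -1, s = 2 & p = 1].
Proof.
move=> chi e2 xi1.
have XsubC_neq0 (z : R) : 'X - z%:P != 0 by rewrite polyXsubC_eq0.
have := congr1 (horner^~ e) chi.
rewrite !hornerE subrr mul0r => /esym/eqP; rewrite mulf_eq0 sqrf_eq0 !subr_eq0.
case/orP => [/eqP e1|/eqP exi].
  move: chi; rewrite e1 -polyC1 [(_ - _) ^+ 2]expr2 -mulrA.
  move=> /(mulfI (XsubC_neq0 _)) /(congr1 (horner^~ 0)).
  rewrite !hornerE expr0n mulr0n subr0 add0r mulN1r opprK => p_xi.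
  by move: xi1; rewrite -p_xi -e2 e1 expr1n eqxx.
move: chi; rewrite -exi [RHS]mulrC => /(mulfI (XsubC_neq0 _)) chi.
have := congr1 (horner^~ 0) chi; have := congr1 (horner^~ 1) chi.
rewrite !hornerE expr1n subrr expr0n mulr0n subr0 add0r sqrrN expr1n => at1 p1.
split=> //; last by apply/eqP; rewrite -subr_eq0 -oppr_eq0 -at1 p1; apply/eqP; ring.
by move/eqP: e2; rewrite p1 sqrf_eq1 exi (negPf xi1) => /eqP.
Qed.

Section PoissonReflections.
Variable K : fieldType.
Hypothesis K_char0 : [pchar K] =i pred0.
Local Notation P := {mpoly K[3]}.

Lemma mx3_unipotent_pow (eps a b c d e f : K) : b + f = 2 -> b * f - c * e = 1 ->
  forall k, exists eps' a' d', (mx3 eps 0 0 a b c d e f) ^+ k =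
    mx3 eps' 0 0 a' (1 + k%:R * (b - 1)) (k%:R * c) d' (k%:R * e) (1 + k%:R * (f - 1)).
Proof.
move=> tr2 det1; have f2b : f = 2 - b by rewrite -tr2 addrC addKr.
rewrite {f tr2}f2b in det1 *.
have nil2 : (b - 1) ^+ 2 + c * e = 0.
  by transitivity (1 - (b * (2 - b) - c * e)); [ring | rewrite det1 subrr].
elim=> [|k [eps' [a' [d' IH]]]]; first by exists 1, 0, 0; rewrite expr0 mx3_1 !mul0r !addr0.
exists (eps' * eps), (a' * eps + (1 + k%:R * (b - 1)) * a + k%:R * c * d),
  (d' * eps + k%:R * e * a + (1 + k%:R * (2 - b - 1)) * d).
rewrite exprSr IH -mulmxE mulmx_mx3; congr mx3; rewrite ?mulrS;
  first [ring | apply/subr0_eq; transitivity (k%:R * ((b - 1) ^+ 2 + c * e));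
                [ring | by rewrite nil2 mulr0]].
Qed.

Lemma unipotent_mx3_finite_order (eps a b c d e f : K) n : (0 < n)%N ->
  b + f = 2 -> b * f - c * e = 1 -> (mx3 eps 0 0 a b c d e f) ^+ n = 1 ->
  [/\ b = 1, c = 0, e = 0 & f = 1].
Proof.
move=> n_gt0 tr2 det1; have [? [? [? ->]]] := mx3_unipotent_pow eps a d tr2 det1 n.
rewrite mx3_1 => /matrixP Mn1.
have n0 (r : K) : n%:R * r = 0 -> r = 0.
  by move/eqP; rewrite mulf_eq0 (negPf (natr_neq0 K_char0 n_gt0)) => /eqP.
have b1 : b = 1.
  by have := Mn1 1 1; rewrite !mxE /= -[RHS]addr0 => /addrI /n0 /subr0_eq.
split=> //.
- by have := Mn1 1 2; rewrite !mxE => /n0.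
- by have := Mn1 2 1; rewrite !mxE => /n0.
- by apply: (addrI b); rewrite tr2 b1.
Qed.

Lemma finite_order_lin_subst (phi : P -> P) A : phi =1 lin_subst A ->
  finite_order phi -> exists2 n, (0 < n)%N & A ^+ n = 1.
Proof.
move=> phiE [n [n_gt0 phin]]; exists n => //.
rewrite -[LHS]mat_P1_lin_subst -[RHS]mat_P1_lin_subst; apply: eq_mat_P1 => p.
by rewrite -(iter_lin_subst phiE) phin lin_subst1.
Qed.

Lemma is_PReflection_eq (f g : P -> P) : f =1 g -> is_PReflection f -> is_PReflection g.
Proof.
move=> fg [f_gr [[n [n_gt0 fn]] [m [xi f_chi]]]]; split; first exact: is_gr_PAut_eq f_gr.
split; first by exists n; split=> // p; rewrite -(eq_iter fg) fn.
by exists m, xi; rewrite -(eq_mat_P1 fg).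
Qed.

Lemma PReflection_mx3 (phi : P -> P) : is_PReflection phi ->
  exists a d : K, phi =1 lin_subst (mx3 (-1) 0 0 a 1 0 d 0 1).
Proof.
case=> [phi_gr [phi_fin [m [xi [_ [xi1 chi]]]]]].
have [eps [a [b [c [d [e [f [_ [eps2 phiE]]]]]]]]] := gr_PAut_mx3 K_char0 phi_gr.
rewrite (eq_mat_P1 phiE) mat_P1_lin_subst char_poly_mx3_block in chi.
have [eps_N1 tr2 det1] := reflection_char_poly chi eps2 xi1.
have [n n_gt0 Mn1] := finite_order_lin_subst phiE phi_fin.
have [b1 c0 e0 f1] := unipotent_mx3_finite_order n_gt0 tr2 det1 Mn1.
by exists a, d; rewrite eps_N1 b1 c0 e0 f1 in phiE.
Qed.

Lemma is_PReflection_mx3 (a d : K) : is_PReflection (lin_subst (mx3 (-1) 0 0 a 1 0 d 0 1)).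
Proof.
set M := mx3 _ _ _ _ _ _ _ _ _.
have N1_neq1 : (-1 : K) != 1.
  by rewrite -subr_eq0 -opprD oppr_eq0; apply: (natr_neq0 K_char0 (m := 2)).
split.
  by apply: is_gr_PAut_mx3; rewrite ?sqrrN mulr1 mul0r ?subr0 ?expr1n ?oner_neq0.
split.
  exists 2%N; split=> // p; rewrite (iter_lin_subst (frefl _)).
  suff -> : M ^+ 2 = 1 by apply: lin_subst1.
  by rewrite expr2 -mulmxE mulmx_mx3 mx3_1; congr mx3; ring.
exists 2%N, (-1); split.
  apply/andP; split=> //; apply/forallP => -[[|[|//]] ?]; rewrite unity_rootE /=.
    by rewrite expr1 (negPf N1_neq1).
  by rewrite sqrrN expr1n !eqxx.
split=> //; rewrite mat_P1_lin_subst char_poly_mx3_block.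
by rewrite -polyC1 -polyCN; ring.
Qed.

End PoissonReflections.

Theorem lemma3p1p1 (K : closedFieldType) (hK : [pchar K] =i pred0) :
  (forall phi : {mpoly K[3]} -> {mpoly K[3]},
     is_gr_PAut phi <->
     exists eps a b c d e f : K,
       b * f != c * e /\ eps ^+ 2 = b * f - c * e /\
       phi =1 lin_subst (mx3 eps 0 0 a b c d e f)) /\
  (forall phi : {mpoly K[3]} -> {mpoly K[3]},
     is_PReflection phi <->
     exists a d : K, phi =1 lin_subst (mx3 (-1) 0 0 a 1 0 d 0 1)).
Proof.
split=> phi; split.
- exact: gr_PAut_mx3.
- move=> [eps [a [b [c [d [e [f [det_bc [eps2 phiE]]]]]]]]].
  exact: is_gr_PAut_eq (fsym phiE) (is_gr_PAut_mx3 a d det_bc eps2).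
- exact: PReflection_mx3.
- move=> [a [d phiE]].
  exact: is_PReflection_eq (fsym phiE) (is_PReflection_mx3 hK a d).
Qed.
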